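(* Let $S,T$ be finite sets, $L:\{0,1\}^S\to\{0,1\}$ a monotone Boolean function, and $\psi:S\to T$ a function with $|\psi(A)|=|A|$ for every minimal one-set $A$ of $L$. Let $X=(X(i))_{i\in S}$ and $Y=(Y(j))_{j\in T}$ be i.i.d. Boolean collections with intensity $p\in[0,1]$. Assume moreover that there are $i_1,i_2\in S$ and $j_0\in T$ with $\psi^{-1}(\{j_0\})=\{i_1,i_2\}$ and $|\psi^{-1}(\{j\})|=1$ for all $j\neq j_0$. Then $$\mathbb P[L(X)=1]-\mathbb P[L(Y\circ\psi)=1]=p(1-p)\Big\{\mathbb P\big[L^X_{i_1,i_2}=f_\vee\big]-\mathbb P\big[L^X_{i_1,i_2}=f_\wedge\big]\Big\}.$$
   Context: - Monotone: $x\leq y$ pointwise implies $L(x)\leq L(y)$. - A one-set of $L$ is $A\subset S$ with $L(1_A)=1$; it is minimal if it contains no other one-set as a proper subset. - Intensity $p$ means $\mathbb P[\cdot=1]=p$; $(Y\circ\psi)(i)=Y(\psi(i))$. - For distinct $i_1,i_2\in S$ and $x\in\{0,1\}^S$, $L^x_{i_1,i_2}:\{0,1\}^2\to\{0,1\}$ is $L^x_{i_1,i_2}(z_1,z_2):=L(x')$, where $x'(i_k)=z_k$ for $k=1,2$ and $x'(i)=x(i)$ otherwise. - $f_\vee(z_1,z_2)=z_1\vee z_2$ and $f_\wedge(z_1,z_2)=z_1\wedge z_2$. *)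

From mathcomp Require Import all_boot all_order all_algebra.
Set Implicit Arguments. Unset Strict Implicit. Unset Printing Implicit Defensive.
Import Order.TTheory GRing.Theory Num.Theory.
Local Open Scope ring_scope.

(* Law of an i.i.d. Boolean collection (X(i))_{i in I} of intensity p:
   the probability of the configuration x is prod_i (p if x i else 1-p). *)
Definition bweight (R : ringType) (I : finType) (p : R) (x : {ffun I -> bool}) : R :=
  \prod_(i : I) (if x i then p else 1 - p).

Definition Prob (R : ringType) (I : finType) (p : R) (E : pred {ffun I -> bool}) : R :=
  \sum_(x : {ffun I -> bool} | E x) bweight p x.

Definition monotone (S : finType) (L : {ffun S -> bool} -> bool) : Prop :=
  forall x y : {ffun S -> bool}, (forall i, x i ==> y i) -> L x ==> L y.

Definition indic (S : finType) (A : {set S}) : {ffun S -> bool} := [ffun i => i \in A].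

Definition one_set (S : finType) (L : {ffun S -> bool} -> bool) (A : {set S}) : bool :=
  L (indic A).

Definition minimal_one_set (S : finType) (L : {ffun S -> bool} -> bool) (A : {set S}) : Prop :=
  one_set L A /\ forall B : {set S}, B \proper A -> ~~ one_set L B.

Definition compf (S T : finType) (y : {ffun T -> bool}) (psi : S -> T) : {ffun S -> bool} :=
  [ffun i => y (psi i)].

Definition Lres (S : finType) (L : {ffun S -> bool} -> bool) (i1 i2 : S)
  (x : {ffun S -> bool}) (z1 z2 : bool) : bool :=
  L [ffun i => if i == i1 then z1 else if i == i2 then z2 else x i].

Definition f_or (z1 z2 : bool) : bool := z1 || z2.
Definition f_and (z1 z2 : bool) : bool := z1 && z2.

Definition eqf2 (f g : bool -> bool -> bool) : bool :=
  [forall z1 : bool, forall z2 : bool, f z1 z2 == g z1 z2].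

(* Off [i2], [psi] is a bijection onto [T] sending [i1] and [i2] to [j0], so
   [Y \o psi] has the law of [X] with [X i2] overwritten by [X i1].
   Conditioning on the coordinates outside [{i1, i2}] and writing
   [g = L^X_{i1,i2}], the difference of the two probabilities is
     p^2 g11 + p(1-p)(g10 + g01) + (1-p)^2 g00 - (p g11 + (1-p) g00)
     = p(1-p)(g10 + g01 - g11 - g00),
   and for a monotone [g] the bracket is 1 if [g] is [or], -1 if [g] is [and],
   and 0 otherwise. *)

From mathcomp Require Import all_boot all_order all_algebra.
From mathcomp Require Import ring.
Set Implicit Arguments. Unset Strict Implicit. Unset Printing Implicit Defensive.
Import Order.TTheory GRing.Theory Num.Theory.
Local Open Scope ring_scope.

Definition bweight1 (R : nzRingType) (p : R) (b : bool) : R := if b then p else 1 - p.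

Definition bweight_off (R : nzRingType) (I : finType) (p : R) (i : I)
  (x : {ffun I -> bool}) : R :=
  \prod_(j | j != i) bweight1 p (x j).

Definition ffun_upd (I : finType) (x : {ffun I -> bool}) (i : I) (b : bool) :
  {ffun I -> bool} :=
  [ffun j => if j == i then b else x j].

Section Updates.
Variables (I : finType) (x : {ffun I -> bool}) (i : I).

Lemma ffun_upd_at b : ffun_upd x i b i = b.
Proof. by rewrite ffunE eqxx. Qed.

Lemma ffun_upd_id : ffun_upd x i (x i) = x.
Proof. by apply/ffunP => j; rewrite ffunE; case: eqP => // ->. Qed.

Lemma ffun_upd_upd a b : ffun_upd (ffun_upd x i a) i b = ffun_upd x i b.
Proof. by apply/ffunP => j; rewrite !ffunE; case: eqP. Qed.

Lemma ffun_updC j a b : i != j ->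
  ffun_upd (ffun_upd x i a) j b = ffun_upd (ffun_upd x j b) i a.
Proof.
move=> ij; apply/ffunP => k; rewrite !ffunE.
by case: eqP => [->|//]; rewrite eq_sym (negPf ij).
Qed.

End Updates.

Lemma ProbE (R : nzRingType) (I : finType) (p : R) (E : pred {ffun I -> bool}) :
  Prob p E = \sum_x bweight p x * (E x)%:R.
Proof.
rewrite /Prob big_mkcond; apply: eq_bigr => x _.
by case: (E x); rewrite ?mulr1 ?mulr0.
Qed.

Section Resampling.
Variables (R : comNzRingType) (I : finType) (p : R).

Lemma bweightD1 (i : I) x : bweight p x = bweight1 p (x i) * bweight_off p i x.
Proof. by rewrite /bweight (bigD1 i). Qed.

Lemma bweight_off_upd (i : I) x b : bweight_off p i (ffun_upd x i b) = bweight_off p i x.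
Proof. by apply: eq_bigr => j /negPf ji; rewrite ffunE ji. Qed.

Lemma sum_ffun_split (i : I) (h : {ffun I -> bool} -> R) :
  \sum_x h x = \sum_(x : {ffun I -> bool} | x i) (h x + h (ffun_upd x i false)).
Proof.
pose flip x := ffun_upd x i (~~ x i).
have flipK : involutive flip.
  by move=> x; rewrite /flip ffun_upd_upd ffun_upd_at negbK ffun_upd_id.
rewrite big_split /= [LHS](bigID (fun x : {ffun I -> bool} => x i)) /=; congr (_ + _).
rewrite (reindex_inj (inv_inj flipK)) /=; apply: eq_big => x.
  by rewrite /flip ffun_upd_at negbK.
by rewrite /flip ffun_upd_at negbK => ->.
Qed.

Lemma sum_bweight_resample (i : I) (F : {ffun I -> bool} -> R) :
  \sum_x bweight p x * F x =
  \sum_x bweight p x * (p * F (ffun_upd x i true) + (1 - p) * F (ffun_upd x i false)).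
Proof.
rewrite [LHS](sum_ffun_split i) [RHS](sum_ffun_split i); apply: eq_bigr => x xi.
have xE : ffun_upd x i true = x by rewrite -xi ffun_upd_id.
rewrite !(bweightD1 i) bweight_off_upd !ffun_upd_upd ffun_upd_at xE xi /bweight1.
ring.
Qed.

End Resampling.

Section Marginal.
Variables (R : comNzRingType) (p : R) (S T : finType).
Variables (phi : T -> S) (psi : S -> T) (i0 : S).
Hypothesis phiK : cancel phi psi.
Hypothesis phi_neq_i0 : forall t, phi t != i0.
Hypothesis psiK : forall s, s != i0 -> phi (psi s) = s.

Lemma bweight_off_comp y : bweight_off p i0 (compf y psi) = bweight p y.
Proof.
rewrite /bweight_off (reindex phi) /=; last by exists psi => // s /psiK.
rewrite (eq_bigl xpredT) => [|t]; last exact: phi_neq_i0.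
by apply: eq_bigr => t _; rewrite ffunE phiK.
Qed.

Lemma compf_upd x b : compf (ffun_upd x i0 b) phi = compf x phi.
Proof. by apply/ffunP => t; rewrite !ffunE (negPf (phi_neq_i0 t)). Qed.

Lemma sum_bweight_comp (G : {ffun T -> bool} -> R) :
  \sum_y bweight p y * G y = \sum_x bweight p x * G (compf x phi).
Proof.
have compfK y : compf (compf y psi) phi = y.
  by apply/ffunP => t; rewrite !ffunE phiK.
rewrite [RHS](sum_ffun_split i0) (reindex (fun y => ffun_upd (compf y psi) i0 true)).
  apply: eq_big => [y|y _]; first by rewrite ffun_upd_at.
  rewrite ffun_upd_upd !compf_upd compfK !(bweightD1 _ i0) !ffun_upd_at !bweight_off_upd.
  by rewrite bweight_off_comp /bweight1; ring.
exists (fun x => compf x phi) => [y _|x]; first by rewrite compf_upd compfK.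
rewrite inE => xi0.
apply/ffunP => s; rewrite !ffunE; case: eqP => [->|/eqP si0]; first by rewrite xi0.
by rewrite psiK.
Qed.

End Marginal.

Section Fibres.
Variables (S T : finType) (psi : S -> T) (i1 i2 : S) (j0 : T).
Hypothesis neq12 : i1 != i2.
Hypothesis fibre_j0 : psi @^-1: [set j0] = [set i1; i2].
Hypothesis fibre1 : forall j, j != j0 -> #|psi @^-1: [set j]| = 1%N.

Lemma psi_i1 : psi i1 = j0.
Proof. by have := set21 i1 i2; rewrite -fibre_j0 inE => /set1P. Qed.

Lemma psi_i2 : psi i2 = j0.
Proof. by have := set22 i1 i2; rewrite -fibre_j0 inE => /set1P. Qed.

Lemma psi_inj_off_i2 : {in [pred s | s != i2] &, injective psi}.
Proof.
move=> s s'; rewrite !inE => s2 s'2 ss'.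
have [sj0|snj0] := eqVneq (psi s) j0.
  have : s \in psi @^-1: [set j0] by rewrite inE sj0 set11.
  have : s' \in psi @^-1: [set j0] by rewrite inE -ss' sj0 set11.
  by rewrite fibre_j0 !inE (negPf s2) (negPf s'2) !orbF => /eqP -> /eqP ->.
have /eqP/cards1P [a fibre_a] := fibre1 snj0.
have : s \in psi @^-1: [set psi s] by rewrite inE set11.
have : s' \in psi @^-1: [set psi s] by rewrite inE ss' set11.
by rewrite fibre_a !inE => /eqP -> /eqP ->.
Qed.

Lemma fibre_off_i2 t : exists s, (psi s == t) && (s != i2).
Proof.
have [->|tnj0] := eqVneq t j0; first by exists i1; rewrite psi_i1 eqxx.
have /eqP/cards1P [s fibre_s] := fibre1 tnj0.
have : s \in psi @^-1: [set t] by rewrite fibre_s set11.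
rewrite !inE => /eqP psis; exists s; rewrite psis eqxx /=.
by apply: contraNneq tnj0 => si2; rewrite -psis si2 psi_i2.
Qed.

(* The default [i1] is never returned: every fibre meets [S :\ i2]. *)
Definition sec (t : T) : S := odflt i1 [pick s | (psi s == t) && (s != i2)].

Lemma sec_spec t : (psi (sec t) == t) && (sec t != i2).
Proof.
rewrite /sec; case: pickP => [s //|none].
by have [s] := fibre_off_i2 t; rewrite none.
Qed.

Lemma secK : cancel sec psi.
Proof. by move=> t; have /andP[/eqP] := sec_spec t. Qed.

Lemma sec_neq_i2 t : sec t != i2.
Proof. by have /andP[] := sec_spec t. Qed.

Lemma sec_psi s : s != i2 -> sec (psi s) = s.
Proof. by move=> si2; apply: psi_inj_off_i2; rewrite ?inE ?sec_neq_i2 ?secK. Qed.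

Lemma compf_sec x : compf (compf x sec) psi = ffun_upd x i2 (x i1).
Proof.
apply/ffunP => s; rewrite !ffunE.
by case: eqP => [->|/eqP si2]; rewrite ?psi_i2 -?psi_i1 sec_psi.
Qed.

End Fibres.

Definition monotone2 (g : bool -> bool -> bool) : Prop :=
  forall a b a' b', a ==> a' -> b ==> b' -> g a b ==> g a' b'.

Lemma eqf2E (f g : bool -> bool -> bool) :
  eqf2 f g = [&& f false false == g false false, f false true == g false true,
                 f true false == g true false & f true true == g true true].
Proof.
apply/forallP/and4P => [fg|[? ? ? ?] []]; try by apply/forallP => -[].
have fgE z1 z2 : f z1 z2 == g z1 z2 by exact: (forallP (fg z1) z2).
by rewrite !fgE.
Qed.

Lemma monotone2_corners (R : nzRingType) (g : bool -> bool -> bool) : monotone2 g ->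
  (g true false)%:R + (g false true)%:R - (g true true)%:R - (g false false)%:R
  = (eqf2 g f_or)%:R - (eqf2 g f_and)%:R :> R.
Proof.
move=> mg; rewrite !eqf2E /f_or /f_and /=.
have := mg false false false true isT isT; have := mg false false true false isT isT.
have := mg false true true true isT isT; have := mg true false true true isT isT.
case: (g false false); case: (g false true); case: (g true false); case: (g true true) => //= *.
all: by rewrite ?(addr0, add0r, subr0, sub0r, addrK, subrr, oppr0).
Qed.

Section Restriction.
Variables (S : finType) (L : {ffun S -> bool} -> bool) (i1 i2 : S) (x : {ffun S -> bool}).

Lemma LresE a b : Lres L i1 i2 x a b = L (ffun_upd (ffun_upd x i2 b) i1 a).
Proof. by congr L; apply/ffunP => i; rewrite !ffunE. Qed.

Lemma Lres_monotone : monotone L -> monotone2 (Lres L i1 i2 x).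
Proof.
move=> monoL a b a' b' aa' bb'; apply: monoL => i; rewrite !ffunE.
by case: (i == i1); case: (i == i2); rewrite ?implybb.
Qed.

End Restriction.

Theorem lemma6 (R : realFieldType) (S T : finType)
  (L : {ffun S -> bool} -> bool) (psi : S -> T) (p : R)
  (i1 i2 : S) (j0 : T) :
  monotone L ->
  (forall A : {set S}, minimal_one_set L A -> #|psi @: A| = #|A|) ->
  0 <= p -> p <= 1 ->
  i1 != i2 ->
  psi @^-1: [set j0] = [set i1; i2] ->
  (forall j : T, j != j0 -> #|psi @^-1: [set j]| = 1%N) ->
  Prob p (fun x : {ffun S -> bool} => L x)
    - Prob p (fun y : {ffun T -> bool} => L (compf y psi))
  = p * (1 - p) *
    (Prob p (fun x : {ffun S -> bool} => eqf2 (Lres L i1 i2 x) f_or)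
     - Prob p (fun x : {ffun S -> bool} => eqf2 (Lres L i1 i2 x) f_and)).
Proof.
move=> monoL _ _ _ neq12 fibre_j0 fibre1.
rewrite !ProbE (sum_bweight_comp _ (secK neq12 fibre_j0 fibre1)
  (sec_neq_i2 neq12 fibre_j0 fibre1) (sec_psi neq12 fibre_j0 fibre1)).
pose F x := (L x)%:R - (L (ffun_upd x i2 (x i1)))%:R : R.
rewrite -!sumrB (eq_bigr (fun x => bweight p x * F x)) => [|x _]; last first.
  by rewrite (compf_sec neq12 fibre_j0 fibre1) -mulrBr.
rewrite (sum_bweight_resample p i1) (sum_bweight_resample p i2) mulr_sumr.
apply: eq_bigr => x _; rewrite -mulrBr -(monotone2_corners R (Lres_monotone i1 i2 x monoL)).
rewrite /F !ffun_upd_at !(ffun_updC _ _ _ neq12) !ffun_upd_upd -!LresE.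
ring.
Qed.
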